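(* Let $L$ be a finite geometric lattice equipped with a sheaf $F$ and let $f:\widetilde L\to L$ be its Boolean cover. Then for any atom $a\in L$ there is a long exact sequence $$\cdots\to\mathrm{HC}_i(\widetilde{L^a};F)\to\mathrm{HC}_i(\widetilde{L_a};F)\to\mathrm{HC}_i(\widetilde L;F)\to\mathrm{HC}_{i-1}(\widetilde{L^a};F)\to\mathrm{HC}_{i-1}(\widetilde{L_a};F)\to\cdots$$
   Context: A finite lattice $L$ with minimum $\mathbf{0}$ is graded by a rank function $rk$ with $rk(\mathbf{0})=0$; its atoms are the rank-$1$ elements; it is atomic if every element is a join of atoms (the empty join being $\mathbf{0}$); it is geometric if it is graded and atomic and $rk(x\vee y)+rk(x\wedge y)\le rk(x)+rk(y)$ for all $x,y$. A sheaf $F$ on a poset assigns an $R$-module $F(x)$ ($R$ a commutative ring with $1$) to each element and a map $F^y_x:F(y)\to F(x)$ to each $x\le y$, functorially (a contravariant functor). For an atom $a$ of $L$: the deletion $L_a$ is the subposet of elements of $L$ expressible as joins of atoms other than $a$ (a graded atomic lattice whose atoms are the atoms of $L$ other than $a$); the restriction $L^a$ is the interval $\{x\in L:x\ge a\}$ (a graded atomic lattice with minimum $a$ whose atoms are the elements covering $a$). Both carry the restriction of $F$. Boolean cover of a graded atomic lattice $M$ with atoms $A_M$ and sheaf $G$: $\widetilde M$ is the lattice of all subsets of $A_M$ ordered by inclusion, with $f:\widetilde M\to M$ sending $S$ to the join of $S$ in $M$ (with $\varnothing\mapsto$ the minimum of $M$); the induced sheaf, still written $G$, is $G(S)=G(f(S))$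 with structure maps $G^{f(T)}_{f(S)}$. Cellular homology: for the Boolean lattice $B$ of subsets of a finite set $\{a_1,\dots,a_n\}$ with sheaf $G$, $C_k(B;G)=\bigoplus_{|x|=k}G(x)$ with differential $\sum\varepsilon^x_yG^x_y$ over pairs $y\subset x$, $|y|=|x|-1$, where $\varepsilon^x_y=(-1)^{j-1}$ if $x=\{a_{i_1},\dots,a_{i_k}\}$ ($i_1<\cdots<i_k$) and $y=x\setminus\{a_{i_j}\}$; $\mathrm{HC}_*(B;G)$ denotes its homology. *)

From HB Require Import structures.
From mathcomp Require Import all_boot all_order all_algebra.
Set Implicit Arguments. Unset Strict Implicit. Unset Printing Implicit Defensive.
Import Order.Theory GRing.Theory.

Section LatticeDefs.
Local Open Scope order_scope.
Context {disp : Order.disp_t} {L : finTBLatticeType disp}.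

Definition covers (x y : L) : bool :=
  (x < y) && [forall z : L, ~~ ((x < z) && (z < y))].

Definition graded (rk : L -> nat) : Prop :=
  rk \bot = 0%N /\ forall x y : L, covers x y -> rk y = (rk x).+1.

Definition atoms (rk : L -> nat) : {set L} := [set x | rk x == 1%N].

Definition bjoin (S : {set L}) : L := \big[Order.join/Order.bottom]_(y in S) y.

Definition atomic (rk : L -> nat) : Prop :=
  forall x : L, exists S : {set L}, S \subset atoms rk /\ x = bjoin S.

Definition geometric (rk : L -> nat) : Prop :=
  [/\ graded rk, atomic rk &
      forall x y : L, (rk (x `|` y) + rk (x `&` y) <= rk x + rk y)%N].

(* Sheaf of R-modules on L: modules Fm x, maps Fr x y : Fm y -> Fm x for
   x <= y (R-linear, functorial).  Fr x y for x not <= y is irrelevant. *)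
Definition is_sheaf (R : comPzRingType) (Fm : L -> lmodType R)
    (Fr : forall x y : L, Fm y -> Fm x) : Prop :=
  [/\ forall x y, x <= y -> forall u v, Fr x y (u + v)%R = (Fr x y u + Fr x y v)%R,
      forall x y, x <= y -> forall (r : R) u, Fr x y (r *: u)%R = (r *: Fr x y u)%R,
      forall x u, Fr x x u = u &
      forall x y z, x <= y -> y <= z -> forall u, Fr x y (Fr y z u) = Fr x z u].
End LatticeDefs.

(* Sheaves on Boolean lattices of subsets of a finite set A of "atoms"        *)
(* (atoms are elements of a finite type T; the Boolean lattice is the set of  *)
(* subsets S of A), together with their cellular chain complex.               *)
Record bcomplex (R : comPzRingType) (T : finType) := BComplex {
  bc_atoms : {set T};
  bc_mod : {set T} -> lmodType R;
  bc_res : forall S S' : {set T}, bc_mod S' -> bc_mod S }.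

Section BooleanHomology.
Local Open Scope ring_scope.
Context {R : comPzRingType} {T : finType}.

(* A chain is an element of the direct sum of all bc_mod S (a finite sum,
   represented as a dependent function). *)
Definition chain (C : bcomplex R T) := forall S : {set T}, bc_mod C S.

Definition chain0 (C : bcomplex R T) : chain C := fun S => 0.
Definition chainD (C : bcomplex R T) (c c' : chain C) : chain C :=
  fun S => c S + c' S.
Definition chainN (C : bcomplex R T) (c : chain C) : chain C := fun S => - c S.
Definition chainZ (C : bcomplex R T) (r : R) (c : chain C) : chain C :=
  fun S => r *: c S.

(* sign eps^{S + b}_S = (-1)^(j-1), j the position of b in S+b for the
   ordering of T given by enum_rank *)
Definition bsign (S : {set T}) (b : T) : R :=
  (-1) ^+ #|[set y in S | (enum_rank y < enum_rank b)%N]|.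

Definition bdiff (C : bcomplex R T) (c : chain C) : chain C :=
  fun S => \sum_(b in bc_atoms C :\: S)
             bsign S b *: @bc_res _ _ C S (b |: S) (c (b |: S)).

Definition is_kchain (C : bcomplex R T) (k : nat) (c : chain C) : Prop :=
  forall S : {set T}, ~~ ((S \subset bc_atoms C) && (#|S| == k)) -> c S = 0.

Definition is_cycle (C : bcomplex R T) (k : nat) (c : chain C) : Prop :=
  is_kchain k c /\ forall S : {set T}, bdiff c S = 0.

Definition is_boundary (C : bcomplex R T) (k : nat) (c : chain C) : Prop :=
  exists b : chain C, is_kchain k.+1 b /\ forall S : {set T}, c S = bdiff b S.

Definition homologous (C : bcomplex R T) (k : nat) (c c' : chain C) : Prop :=
  is_boundary k (chainD c (chainN c')).

(* g induces an R-module homomorphism HC_k(C) -> HC_m(D): it maps k-cycles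
   to m-cycles, is compatible with homology, and is R-linear on classes.
   (Every homomorphism HC_k(C) -> HC_m(D) arises this way by choosing
   representatives.) *)
Definition hom_map (C D : bcomplex R T) (k m : nat) (g : chain C -> chain D)
    : Prop :=
  [/\ forall c, is_cycle k c -> is_cycle m (g c),
      forall c c', is_cycle k c -> is_cycle k c' -> homologous k c c' ->
        homologous m (g c) (g c'),
      forall c c', is_cycle k c -> is_cycle k c' ->
        homologous m (g (chainD c c')) (chainD (g c) (g c')) &
      forall (r : R) c, is_cycle k c ->
        homologous m (g (chainZ r c)) (chainZ r (g c))].

Definition exact_at (C D E : bcomplex R T) (k m n : nat)
    (g : chain C -> chain D) (h : chain D -> chain E) : Prop :=
  forall z, is_cycle m z ->
    (homologous n (h z) (chain0 E) <->
     exists w, is_cycle k w /\ homologous m (g w) z).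

Definition hom_onto (C D : bcomplex R T) (k m : nat) (g : chain C -> chain D)
    : Prop :=
  forall z, is_cycle m z -> exists w, is_cycle k w /\ homologous m (g w) z.
End BooleanHomology.

Section Covers.
Local Open Scope order_scope.
Context {R : comPzRingType} {disp : Order.disp_t} {L : finTBLatticeType disp}.
Variables (rk : L -> nat) (Fm : L -> lmodType R)
          (Fr : forall x y : L, Fm y -> Fm x).

Definition cover_complex : bcomplex R L :=
  @BComplex R L (atoms rk) (fun S => Fm (bjoin S))
    (fun S S' => @Fr (bjoin S) (bjoin S')).

(* Boolean cover of the deletion L_a: subsets of atoms other than a; the
   join in L_a of such a set coincides with its join in L *)
Definition deletion_complex (a : L) : bcomplex R L :=
  @BComplex R L (atoms rk :\ a) (fun S => Fm (bjoin S))
    (fun S S' => @Fr (bjoin S) (bjoin S')).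

(* Boolean cover of the restriction L^a = [a, top]: subsets of the elements
   covering a; the join in L^a of S is a `|` (join of S in L) *)
Definition restriction_complex (a : L) : bcomplex R L :=
  @BComplex R L [set y | covers a y] (fun S => Fm (a `|` bjoin S))
    (fun S S' => @Fr (a `|` bjoin S) (a `|` bjoin S')).
End Covers.

Arguments is_sheaf {disp L R} Fm Fr.
Arguments cover_complex {R disp L} rk Fm Fr.
Arguments deletion_complex {R disp L} rk Fm Fr a.
Arguments restriction_complex {R disp L} Fm Fr a.

From HB Require Import structures.
From mathcomp Require Import all_boot all_order all_algebra.
From mathcomp Require Import ring boolp.
From Stdlib Require Import ClassicalEpsilon.
Set Implicit Arguments. Unset Strict Implicit. Unset Printing Implicit Defensive.
Import Order.Theory GRing.Theory.
Local Open Scope ring_scope.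

(* Split the cells of the Boolean cover of [L] according to whether they
   contain the atom [a].  Those avoiding [a] form the Boolean cover of the
   deletion [L_a]; [S |-> S :\ a] identifies the others, up to a sign and a
   shift of degree, with the Boolean complex on the atoms other than [a]
   labelled by [S |-> a `|` join S].  This short exact sequence of complexes
   gives a long exact sequence, whose connecting map lifts a cycle and takes
   its boundary.  The labelled complex has the homology of the Boolean cover
   of [L^a]: both arise from the complex on the union of the two atom sets by
   deleting redundant atoms [x], those for which some remaining atom [y]
   satisfies [a `|` join (y |: T) = a `|` join T] whenever [x \in T].  For an
   atom [b <> a] take [y = a `|` b], which covers [a] by semimodularity; a
   cover of [a] lies above an atom [y <> a] by atomicity.  Deleting a
   redundant atom does not change homology, by an explicit contracting
   homotopy. *)

Section DirectSum.
Variables (R : pzRingType) (I : Type) (M : I -> lmodType R).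

Definition dsum := forall i, M i.

Lemma dsumP (c c' : dsum) : (forall i, c i = c' i) -> c = c'.
Proof. exact: functional_extensionality_dep. Qed.

Let dsum0 : dsum := fun i => 0.
Let dsumN (c : dsum) : dsum := fun i => - c i.
Let dsumD (c c' : dsum) : dsum := fun i => c i + c' i.
Let dsumZ (r : R) (c : dsum) : dsum := fun i => r *: c i.

Let dsumDA : associative dsumD.
Proof. by move=> c c' c''; apply: dsumP => i; exact: addrA. Qed.
Let dsumDC : commutative dsumD.
Proof. by move=> c c'; apply: dsumP => i; exact: addrC. Qed.
Let dsum0D : left_id dsum0 dsumD.
Proof. by move=> c; apply: dsumP => i; exact: add0r. Qed.
Let dsumND : left_inverse dsum0 dsumN dsumD.
Proof. by move=> c; apply: dsumP => i; exact: addNr. Qed.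

HB.instance Definition _ := Choice.copy dsum (forall i, M i).
HB.instance Definition _ := GRing.isZmodule.Build dsum dsumDA dsumDC dsum0D dsumND.

Let dsumZA r s c : dsumZ r (dsumZ s c) = dsumZ (r * s) c.
Proof. by apply: dsumP => i; exact: scalerA. Qed.
Let dsumZ1 : left_id 1 dsumZ.
Proof. by move=> c; apply: dsumP => i; exact: scale1r. Qed.
Let dsumZDr : right_distributive dsumZ +%R.
Proof. by move=> r c c'; apply: dsumP => i; exact: scalerDr. Qed.
Let dsumZDl c : {morph dsumZ^~ c : r s / r + s}.
Proof. by move=> r s; apply: dsumP => i; exact: scalerDl. Qed.

HB.instance Definition _ :=
  GRing.Zmodule_isLmodule.Build R dsum dsumZA dsumZ1 dsumZDr dsumZDl.

Lemma dsum0E i : (0 : dsum) i = 0. Proof. by []. Qed.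
Lemma dsumDE (c c' : dsum) i : (c + c') i = c i + c' i. Proof. by []. Qed.
Lemma dsumNE (c : dsum) i : (- c) i = - c i. Proof. by []. Qed.
Lemma dsumZE r (c : dsum) i : (r *: c) i = r *: c i. Proof. by []. Qed.
Definition dsumE := (dsum0E, dsumDE, dsumNE, dsumZE).
End DirectSum.

Section Signs.
Variables (R : comPzRingType) (T : finType).
Implicit Types (S : {set T}) (P : pred T).

Definition psign P S : R := (-1) ^+ #|[set y in S | P y]|.

Lemma psignU1 P S b : b \notin S -> psign P (b |: S) = (-1) ^+ P b * psign P S.
Proof.
move=> bS; rewrite /psign -exprD; congr (_ ^+ _).
have [Pb|nPb] := boolP (P b).
  have -> : [set y in b |: S | P y] = b |: [set y in S | P y].
    by apply/setP => y; rewrite !inE; case: eqP => // ->.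
  by rewrite cardsU1 inE (negbTE bS).
suff -> : [set y in b |: S | P y] = [set y in S | P y] by [].
apply/setP => y; rewrite !inE.
by case: eqP => [->|//]; rewrite (negbTE nPb) !andbF.
Qed.

Lemma psign_sq P S : psign P S * psign P S = 1.
Proof. by rewrite -expr2 sqrr_sign. Qed.

Lemma bsignU1 S b c : c \notin S ->
  bsign (c |: S) b = (-1) ^+ (enum_rank c < enum_rank b)%N * bsign S b :> R.
Proof. exact: psignU1. Qed.

Lemma bsign_sq S b : bsign S b * bsign S b = 1 :> R.
Proof. exact: psign_sq. Qed.

Lemma sign_rank_swap (b c : T) : b != c ->
  (-1) ^+ (enum_rank b < enum_rank c)%N = - (-1) ^+ (enum_rank c < enum_rank b)%N :> R.
Proof.
move=> bc; case: ltngtP => [_|_|/val_inj/enum_rank_inj eq_bc]; rewrite /= ?opprK //.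
by rewrite eq_bc eqxx in bc.
Qed.

Lemma bsign_swap S b c : b \notin S -> c \notin S -> b != c ->
  bsign S b * bsign (b |: S) c = - (bsign S c * bsign (c |: S) b) :> R.
Proof. by move=> bS cS bc; rewrite !bsignU1 // (sign_rank_swap bc); ring. Qed.

Lemma bsignU1_mul S b c : b \notin S -> c \notin S -> b != c ->
  bsign (b |: S) c * bsign (c |: S) b = - (bsign S c * bsign S b) :> R.
Proof.
move=> bS cS bc; rewrite !bsignU1 // (sign_rank_swap bc) !mulNr mulrACA.
by rewrite -expr2 sqrr_sign mul1r.
Qed.

Lemma sum_pairs_antisym (V : zmodType) (Y : {set T}) (f : T -> T -> V) :
  (forall b c, b \in Y -> c \in Y -> b != c -> f c b = - f b c) ->
  \sum_(b in Y) \sum_(c in Y :\ b) f b c = 0.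
Proof.
move=> f_anti; pose lt (b c : T) := (enum_rank b < enum_rank c)%N.
have split_lt b : \sum_(c in Y :\ b) f b c =
    \sum_(c in Y | lt b c) f b c + \sum_(c in Y | lt c b) f b c.
  rewrite (bigID (lt b)) /=; congr (_ + _); apply: eq_bigl => c; rewrite !inE /lt.
    by case: eqP => [->|]; rewrite ?ltnn ?andbF.
  by rewrite -leqNgt ltn_neqAle val_eqE (inj_eq enum_rank_inj) [RHS]andbCA andbA.
rewrite (eq_bigr _ (fun b _ => split_lt b)) big_split /=.
rewrite [X in _ + X](exchange_big_dep (mem Y)) /=; last by move=> b c _ /andP[].
rewrite -big_split big1 // => b Yb; rewrite Yb -big_split big1 // => c /andP[Yc lt_bc].
rewrite f_anti //; first exact: addNr.
by move: lt_bc; apply: contraTneq => ->; rewrite /lt ltnn.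
Qed.
End Signs.
Arguments psign {R T} P S.

Section GeometricLattice.
Local Open Scope order_scope.
Variables (disp : Order.disp_t) (L : finTBLatticeType disp) (rk : L -> nat).
Hypothesis rk_geo : geometric rk.

Lemma rk_lt x y : x < y -> (rk x < rk y)%N.
Proof.
have [[_ rk_cover] _ _] := rk_geo; pose itv (u v : L) := [set w | u < w <= v].
move: {2}#|itv x y| (leqnn #|itv x y|) => m.
elim: m x y => [|m IHm] x y le_m lt_xy.
  by move: le_m; rewrite leqn0 cards_eq0 => /eqP/setP/(_ y); rewrite !inE lt_xy lexx.
have [/rk_cover -> //|] := boolP (covers x y).
rewrite /covers lt_xy negb_forall => /existsP[z]; rewrite negbK => /andP[lt_xz lt_zy].
have shrink u v : itv u v \proper itv x y -> (#|itv u v| <= m)%N.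
  by move=> /proper_card lt_uv; rewrite -ltnS; apply: leq_trans lt_uv le_m.
apply: (@ltn_trans (rk z)); apply: IHm => //; apply: shrink; apply/properP; split.
- by apply/subsetP => w; rewrite !inE => /andP[-> /le_trans]; apply; apply: ltW.
- by exists y; rewrite !inE ?lt_xy ?lexx // lt_geF.
- by apply/subsetP => w; rewrite !inE => /andP[/(lt_trans lt_xz) -> ->].
- by exists z; rewrite !inE ?lt_xz ?ltW // ltxx.
Qed.

Lemma covers_join a b : a \in atoms rk -> b \in atoms rk -> b != a -> covers a (a `|` b).
Proof.
rewrite !inE => /eqP rk_a /eqP rk_b neq_ba; have [_ _ rk_sub] := rk_geo.
have lt_a_ab : a < a `|` b.
  rewrite lt_def leUl andbT; apply: contra neq_ba => /eqP eq_ab.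
  have : b <= a by rewrite -eq_ab leUr.
  rewrite le_eqVlt => /orP[//|/rk_lt]; by rewrite rk_a rk_b ltnn.
have rk_ab : (rk (a `|` b) <= 2)%N.
  by move: (rk_sub a b); rewrite rk_a rk_b; apply: leq_trans; apply: leq_addr.
rewrite /covers lt_a_ab; apply/forallP => z; apply/negP => /andP[/rk_lt lt_az /rk_lt lt_zab].
by move: (leq_trans lt_zab rk_ab); rewrite ltnS leqNgt -rk_a lt_az.
Qed.

Lemma atom_le_cover a c : covers a c -> exists2 b, b \in atoms rk :\ a & b <= c.
Proof.
have [_ rk_atomic _] := rk_geo; move=> /andP[lt_ac _].
have [S [sSA eq_c]] := rk_atomic c.
have : ~~ (S \subset [set a]).
  apply: contraTN lt_ac => sSa; rewrite le_gtF // eq_c; apply/joinsP => b /(subsetP sSa).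
  by rewrite inE => /eqP ->.
case/subsetPn => b bS nba; exists b; last by rewrite eq_c; apply: joins_sup.
by rewrite in_setD1 -in_set1 nba (subsetP sSA).
Qed.
End GeometricLattice.

Section Sheaf.
Local Unset Implicit Arguments.
Variables (R : comPzRingType) (disp : Order.disp_t) (L : finTBLatticeType disp)
  (Fm : L -> lmodType R) (Fr : forall x y : L, Fm y -> Fm x).
Local Set Implicit Arguments.
Implicit Types (b y : L) (S T X Y Z : {set L}).
Hypothesis FrD : forall x y, (x <= y)%O -> forall u v, Fr x y (u + v) = Fr x y u + Fr x y v.
Hypothesis FrZ : forall x y, (x <= y)%O -> forall r u, Fr x y (r *: u) = r *: Fr x y u.
Hypothesis Fr1 : forall x u, Fr x x u = u.
Hypothesis FrC : forall x y z, (x <= y)%O -> (y <= z)%O ->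
  forall u, Fr x y (Fr y z u) = Fr x z u.

Lemma Fr0 x y : (x <= y)%O -> Fr x y 0 = 0.
Proof. by move=> le_xy; apply: (addrI (Fr x y 0)); rewrite -FrD // !addr0. Qed.

Lemma Fr_sum x y (I : Type) (r : seq I) (P : pred I) (f : I -> Fm y) : (x <= y)%O ->
  Fr x y (\sum_(i <- r | P i) f i) = \sum_(i <- r | P i) Fr x y (f i).
Proof. by move=> le_xy; apply: (big_morph (Fr x y) (FrD le_xy) (Fr0 le_xy)). Qed.

Lemma FrK x y u : x = y -> Fr x y (Fr y x u) = u.
Proof. by move=> eq_xy; rewrite FrC ?eq_xy // Fr1. Qed.

(* The complexes [cover_complex], [deletion_complex] and [restriction_complex]
   are [kcomplex] for the labellings [S |-> join S] and [S |-> a `|` join S]. *)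
Record labelling := Labelling {
  lab :> {set L} -> L;
  lab_mono : {homo lab : S S' / S \subset S' >-> (S <= S')%O} }.

Definition kcomplex (k : labelling) (X : {set L}) : bcomplex R L :=
  @BComplex R L X (fun S => Fm (k S)) (fun S S' => Fr (k S) (k S')).

Local Notation chains k := (dsum (fun S : {set L} => Fm (k S))).
Local Notation chain_in k X n :=
  (@is_kchain R L (kcomplex k X) n : chains k -> Prop).
Local Notation cycle_in k X n :=
  (@is_cycle R L (kcomplex k X) n : chains k -> Prop).
Local Notation boundary_in k X n :=
  (@is_boundary R L (kcomplex k X) n : chains k -> Prop).
Local Notation homologous_in k X n :=
  (@homologous R L (kcomplex k X) n : chains k -> chains k -> Prop).

Definition bd (k : labelling) X (c : chains k) : chains k := @bdiff R L (kcomplex k X) c.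
Arguments bd : clear implicits.

Lemma hom_mapE (k1 k2 : labelling) X1 X2 n1 n2 (g : chains k1 -> chains k2) :
  @hom_map _ _ (kcomplex k1 X1) (kcomplex k2 X2) n1 n2 g <->
  [/\ forall c, cycle_in k1 X1 n1 c -> cycle_in k2 X2 n2 (g c),
      forall c c', cycle_in k1 X1 n1 c -> cycle_in k1 X1 n1 c' ->
        homologous_in k1 X1 n1 c c' -> homologous_in k2 X2 n2 (g c) (g c'),
      forall c c', cycle_in k1 X1 n1 c -> cycle_in k1 X1 n1 c' ->
        homologous_in k2 X2 n2 (g (c + c')) (g c + g c') &
      forall r c, cycle_in k1 X1 n1 c ->
        homologous_in k2 X2 n2 (g (r *: c)) (r *: g c)].
Proof. exact: iff_refl. Qed.

Lemma exact_atE (k1 k2 k3 : labelling) X1 X2 X3 n1 n2 n3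
    (g : chains k1 -> chains k2) (h : chains k2 -> chains k3) :
  @exact_at _ _ (kcomplex k1 X1) (kcomplex k2 X2) (kcomplex k3 X3) n1 n2 n3 g h <->
  forall z, cycle_in k2 X2 n2 z ->
    (homologous_in k3 X3 n3 (h z) 0 <->
     exists w, cycle_in k1 X1 n1 w /\ homologous_in k2 X2 n2 (g w) z).
Proof. exact: iff_refl. Qed.

Section BooleanComplex.
Variable k : labelling.
Implicit Types (c : chains k).

Lemma le_kU1 b S : (k S <= k (b |: S))%O.
Proof. exact/lab_mono/subsetUr. Qed.

Lemma bdE X c S :
  bd k X c S = \sum_(b in X :\: S) bsign S b *: Fr (k S) (k (b |: S)) (c (b |: S)).
Proof. by []. Qed.

Lemma bd_is_linear X : linear (bd k X).
Proof.
move=> r c c'; apply: dsumP => S; rewrite !dsumE !bdE scaler_sumr -big_split.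
by apply: eq_bigr => b _; rewrite FrD ?le_kU1 // FrZ ?le_kU1 // scalerDr !scalerA mulrC.
Qed.

HB.instance Definition _ X :=
  GRing.isLinear.Build R (chains k) (chains k) *:%R (bd k X) (bd_is_linear X).

Lemma bdK X c : bd k X (bd k X c) = 0.
Proof.
apply: dsumP => S; rewrite bdE /=.
have expand b : bsign S b *: Fr (k S) (k (b |: S)) (bd k X c (b |: S)) =
    \sum_(b' in (X :\: S) :\ b) (bsign S b * bsign (b |: S) b') *:
      Fr (k S) (k (b' |: (b |: S))) (c (b' |: (b |: S))).
  rewrite bdE Fr_sum ?le_kU1 // scaler_sumr.
  have -> : X :\: (b |: S) = (X :\: S) :\ b.
    by apply/setP => y; rewrite !inE negb_or andbA andbC andbA.
  by apply: eq_bigr => b' _; rewrite FrZ ?le_kU1 // FrC ?le_kU1 // scalerA.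
rewrite (eq_bigr _ (fun b _ => expand b)); apply: sum_pairs_antisym => b b'.
rewrite !inE => /andP[bS _] /andP[b'S _] bb'.
by rewrite setUCA bsign_swap 1?eq_sym // scaleNr.
Qed.

Lemma cycle_inP X n c : cycle_in k X n c <-> chain_in k X n c /\ bd k X c = 0.
Proof.
split=> -[c_in bd_c]; split=> //; first exact: dsumP.
by move=> S; change (bd k X c S = 0); rewrite bd_c.
Qed.

Lemma boundary_inP X n c :
  boundary_in k X n c <-> exists2 b, chain_in k X n.+1 b & c = bd k X b.
Proof.
split=> [[b [b_in c_bd]]|[b b_in ->]]; last by exists b.
by exists b => //; apply: dsumP.
Qed.

Lemma homologous_inE X n c c' :
  homologous_in k X n c c' <-> boundary_in k X n (c - c').
Proof. by []. Qed.

Lemma chain_inD X n c c' :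
  chain_in k X n c -> chain_in k X n c' -> chain_in k X n (c + c').
Proof. by move=> c_in c'_in S nS; rewrite dsumE c_in ?c'_in ?addr0. Qed.

Lemma chain_inZ X n r c : chain_in k X n c -> chain_in k X n (r *: c).
Proof. by move=> c_in S nS; rewrite dsumE c_in ?scaler0. Qed.

Lemma chain_inN X n c : chain_in k X n c -> chain_in k X n (- c).
Proof. by move=> c_in; rewrite -scaleN1r; apply: chain_inZ. Qed.

Lemma chain_inB X n c c' :
  chain_in k X n c -> chain_in k X n c' -> chain_in k X n (c - c').
Proof. by move=> c_in c'_in; apply/chain_inD/chain_inN. Qed.

Lemma chain_in_eq0 X n c S : chain_in k X n c -> ~~ (S \subset X) -> c S = 0.
Proof. by move=> c_in nSX; apply: c_in; rewrite /= (negbTE nSX). Qed.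

Lemma chain_in_bd X n c : chain_in k X n.+1 c -> chain_in k X n (bd k X c).
Proof.
move=> c_in S nS; rewrite bdE big1 // => b; rewrite inE => /andP[bS bX].
rewrite c_in ?Fr0 ?le_kU1 ?scaler0 //; apply: contra nS.
by rewrite subUset cardsU1 bS add1n eqSS => /andP[/andP[_ ->] ->].
Qed.

Lemma boundary_in_bd X n c : chain_in k X n.+1 c -> boundary_in k X n (bd k X c).
Proof. by move=> c_in; apply/boundary_inP; exists c. Qed.

Lemma boundary_in0 X n : boundary_in k X n 0.
Proof. by rewrite -(linear0 (bd k X)); apply: boundary_in_bd. Qed.

Lemma boundary_inD X n c c' :
  boundary_in k X n c -> boundary_in k X n c' -> boundary_in k X n (c + c').
Proof.
move=> /boundary_inP[b b_in ->] /boundary_inP[b' b'_in ->].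
by rewrite -linearD; apply/boundary_in_bd/chain_inD.
Qed.

Lemma boundary_inZ X n r c : boundary_in k X n c -> boundary_in k X n (r *: c).
Proof.
move=> /boundary_inP[b b_in ->].
by rewrite -linearZ; apply/boundary_in_bd/chain_inZ.
Qed.

Lemma boundary_inN X n c : boundary_in k X n c -> boundary_in k X n (- c).
Proof. by move=> c_bd; rewrite -scaleN1r; apply: boundary_inZ. Qed.

Lemma boundary_inB X n c c' :
  boundary_in k X n c -> boundary_in k X n c' -> boundary_in k X n (c - c').
Proof. by move=> c_bd c'_bd; apply/boundary_inD/boundary_inN. Qed.

Lemma cycle_inD X n c c' :
  cycle_in k X n c -> cycle_in k X n c' -> cycle_in k X n (c + c').
Proof.
move=> /cycle_inP[c_in bd_c] /cycle_inP[c'_in bd_c']; apply/cycle_inP.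
by rewrite linearD /= bd_c bd_c' addr0; split=> //; apply: chain_inD.
Qed.

Lemma cycle_inZ X n r c : cycle_in k X n c -> cycle_in k X n (r *: c).
Proof.
move=> /cycle_inP[c_in bd_c]; apply/cycle_inP.
by rewrite linearZ /= bd_c scaler0; split=> //; apply: chain_inZ.
Qed.

Lemma cycle_inN X n c : cycle_in k X n c -> cycle_in k X n (- c).
Proof. by move=> c_cyc; rewrite -scaleN1r; apply: cycle_inZ. Qed.

Lemma cycle_inB X n c c' :
  cycle_in k X n c -> cycle_in k X n c' -> cycle_in k X n (c - c').
Proof. by move=> c_cyc c'_cyc; apply/cycle_inD/cycle_inN. Qed.

Lemma cycle_in_bd X n c : chain_in k X n.+1 c -> cycle_in k X n (bd k X c).
Proof. by move=> c_in; apply/cycle_inP; rewrite bdK; split=> //; apply: chain_in_bd. Qed.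

Lemma homologous_in_refl X n c : homologous_in k X n c c.
Proof. by apply/homologous_inE; rewrite subrr; apply: boundary_in0. Qed.

Lemma homologous_in_sym X n c c' :
  homologous_in k X n c c' -> homologous_in k X n c' c.
Proof. by move=> /homologous_inE/boundary_inN; rewrite opprB. Qed.

Lemma homologous_in_trans X n c c' c'' :
  homologous_in k X n c c' -> homologous_in k X n c' c'' -> homologous_in k X n c c''.
Proof.
move=> /homologous_inE c_c' /homologous_inE c'_c''; apply/homologous_inE.
by rewrite -[c](subrK c') -addrA; apply: boundary_inD.
Qed.

Lemma homologous_inD X n c1 c1' c2 c2' :
  homologous_in k X n c1 c1' -> homologous_in k X n c2 c2' ->
  homologous_in k X n (c1 + c2) (c1' + c2').
Proof.
move=> /homologous_inE c1_bd /homologous_inE c2_bd; apply/homologous_inE.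
by rewrite opprD addrACA; apply: boundary_inD.
Qed.

Lemma homologous_inZ X n r c c' :
  homologous_in k X n c c' -> homologous_in k X n (r *: c) (r *: c').
Proof. by move=> /homologous_inE c_bd; apply/homologous_inE; rewrite -scalerBr; apply: boundary_inZ. Qed.

Lemma homologous_in0 X n c : homologous_in k X n c 0 <-> boundary_in k X n c.
Proof. by rewrite homologous_inE subr0. Qed.

Lemma homologous_in_congr X n c c1 d d1 :
  homologous_in k X n c c1 -> homologous_in k X n d d1 ->
  homologous_in k X n c d <-> homologous_in k X n c1 d1.
Proof.
move=> c_c1 d_d1; split=> [c_d|c1_d1].
  exact: homologous_in_trans (homologous_in_trans (homologous_in_sym c_c1) c_d) d_d1.
exact: homologous_in_trans (homologous_in_trans c_c1 c1_d1) (homologous_in_sym d_d1).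
Qed.

Section ChangeOfAtoms.
Variables Y X : {set L}.
Hypothesis sYX : Y \subset X.

Lemma chain_in_subset n c : chain_in k Y n c -> chain_in k X n c.
Proof.
move=> c_in S nS; apply: c_in; apply: contra nS => /andP[sSY ->].
by rewrite (subset_trans sSY sYX).
Qed.

Lemma bd_subset n c : chain_in k Y n c -> bd k X c = bd k Y c.
Proof.
move=> c_in; apply: dsumP => S; rewrite !bdE [RHS]big_mkcond [LHS]big_mkcond.
apply: eq_bigr => b _; rewrite !inE; case: (b \in S) => //=.
have [bY|nbY] := boolP (b \in Y); first by rewrite (subsetP sYX).
case: (b \in X) => //; rewrite c_in ?Fr0 ?le_kU1 ?scaler0 //.
by rewrite subUset sub1set (negbTE nbY).
Qed.

Lemma boundary_in_subset n c : boundary_in k Y n c -> boundary_in k X n c.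
Proof.
move=> /boundary_inP[b b_in ->]; rewrite -(bd_subset b_in).
by apply/boundary_in_bd/chain_in_subset.
Qed.

Lemma homologous_in_subset n c c' :
  homologous_in k Y n c c' -> homologous_in k X n c c'.
Proof. exact: boundary_in_subset. Qed.

Lemma cycle_in_subset n c : cycle_in k Y n c -> cycle_in k X n c.
Proof.
move=> /cycle_inP[c_in bd_c]; apply/cycle_inP.
by rewrite (bd_subset c_in) bd_c; split=> //; apply: chain_in_subset.
Qed.

Lemma cycle_in_supset n c : cycle_in k X n c -> chain_in k Y n c -> cycle_in k Y n c.
Proof. by move=> /cycle_inP[_ bd_c] c_in; apply/cycle_inP; rewrite -(bd_subset c_in). Qed.
End ChangeOfAtoms.

Lemma chain_in_setD1 X n c x : chain_in k X n c ->
  (forall S, x \in S -> c S = 0) -> chain_in k (X :\ x) n c.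
Proof.
move=> c_in c_x S nS; have [/c_x//|xS] := boolP (x \in S).
apply: c_in; apply: contra nS => /andP[sSX ->]; rewrite andbT.
by apply/subsetP => u uS; rewrite !inE (subsetP sSX) // andbT; apply: contraNneq xS => <-.
Qed.

Section RedundantAtom.
Variables (X : {set L}) (x y : L).
Hypotheses (yX : y \in X) (xy : x != y).
Hypothesis k_redundant : forall T, x \in T -> k (y |: T) = k T.

Lemma k_setD1 S : x \in S -> k (S :\ y) = k S.
Proof.
move=> xS; have [yS|nyS] := boolP (y \in S).
  by rewrite -{2}(setD1K yS) k_redundant // !inE xy.
suff -> : S :\ y = S by [].
by apply/setDidPl; rewrite disjoint_sym disjoints1.
Qed.

Definition homotopy (c : chains k) : chains k := fun S =>
  if (x \in S) && (y \in S) then bsign (S :\ y) y *: Fr (k S) (k (S :\ y)) (c (S :\ y))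
  else 0.

Lemma homotopy_is_linear : linear homotopy.
Proof.
move=> r c c'; apply: dsumP => S; rewrite !dsumE /homotopy.
case: ifP => [/andP[xS _]|_]; last by rewrite scaler0 addr0.
by rewrite FrD ?k_setD1 // FrZ ?k_setD1 // scalerDr !scalerA mulrC.
Qed.

HB.instance Definition _ :=
  GRing.isLinear.Build R (chains k) (chains k) *:%R homotopy homotopy_is_linear.

Lemma chain_in_homotopy n c : chain_in k X n c -> chain_in k X n.+1 (homotopy c).
Proof.
move=> c_in S nS; rewrite /homotopy; case: ifP => // /andP[xS yS].
rewrite c_in ?Fr0 ?scaler0 ?k_setD1 //; apply: contra nS => /= /andP[sSX /eqP cardS].
by rewrite -(setD1K yS) subUset sub1set yX sSX cardsU1 setD11 /= add1n eqSS cardS.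
Qed.

Lemma homotopy_eq0 c : (forall S, x \in S -> c S = 0) -> homotopy c = 0.
Proof.
move=> c_x; apply: dsumP => S; rewrite /homotopy; case: ifP => // /andP[xS _].
by rewrite c_x ?Fr0 ?scaler0 ?k_setD1 // !inE xS andbT.
Qed.

Lemma homotopyE_notin c S : x \in S -> y \notin S ->
  (bd k X (homotopy c) + homotopy (bd k X c)) S = c S.
Proof.
move=> xS yS; rewrite dsumE {2}/homotopy (negbTE yS) andbF addr0 bdE.
have yXS : y \in X :\: S by rewrite inE yS yX.
rewrite (big_setD1 y yXS) /= big1 ?addr0 => [|b].
  rewrite /homotopy setU11 !inE xS orbT setU1K // FrZ ?le_kU1 // scalerA.
  by rewrite bsign_sq scale1r FrK // k_redundant.
rewrite !inE => /andP[bny _]; rewrite /homotopy !inE (negbTE yS) orbF [y == b]eq_sym.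
by rewrite (negbTE bny) andbF Fr0 ?le_kU1 ?scaler0.
Qed.

Lemma homotopyE_setU1 c T : x \in T -> y \notin T ->
  (bd k X (homotopy c) + homotopy (bd k X c)) (y |: T) = c (y |: T).
Proof.
move=> xT yT; have kyT := k_redundant xT.
have yXT : y \in X :\: T by rewrite inE yT yX.
rewrite dsumE {2}/homotopy setU11 inE xT orbT setU1K //= [bd k X c T]bdE.
rewrite (big_setD1 y yXT) /= FrD ?kyT // scalerDr FrZ ?kyT // FrK //.
rewrite scalerA bsign_sq scale1r addrCA -[RHS]addr0; congr (_ + _).
have -> : (X :\: T) :\ y = X :\: (y |: T).
  by apply/setP => u; rewrite !inE negb_or andbA.
rewrite bdE Fr_sum ?kyT // scaler_sumr -big_split big1 //= => b.
rewrite !inE negb_or => /andP[/andP[bny bT] _].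
have le_T_byT : (k T <= k (b |: (y |: T)))%O by rewrite -kyT le_kU1.
have le_byT_bT : (k (b |: (y |: T)) <= k (b |: T))%O.
  by rewrite setUCA k_redundant // !inE xT orbT.
rewrite Fr1 /homotopy !inE xT eqxx !orbT /=.
have -> : (b |: (y |: T)) :\ y = b |: T.
  by rewrite setUCA setU1K // !inE negb_or eq_sym bny.
rewrite FrZ // (FrC le_T_byT le_byT_bT) !scalerA.
have ybn : y != b by rewrite eq_sym.
by rewrite -scalerDl bsignU1_mul // [X in _ + X]mulrC addNr scale0r.
Qed.

Lemma homotopyE c S : x \in S -> (bd k X (homotopy c) + homotopy (bd k X c)) S = c S.
Proof.
move=> xS; have [yS|] := boolP (y \in S); last exact: homotopyE_notin.
by rewrite -(setD1K yS) homotopyE_setU1 ?setD11 // !inE xS xy.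
Qed.
End RedundantAtom.

Definition homology_iso Y X := forall n,
  (forall z, cycle_in k X n z -> exists2 w, cycle_in k Y n w & homologous_in k X n z w) /\
  (forall w, chain_in k Y n w -> boundary_in k X n w -> boundary_in k Y n w).

Lemma homology_iso_refl X : homology_iso X X.
Proof. by move=> n; split=> // z z_cyc; exists z => //; apply: homologous_in_refl. Qed.

Lemma homology_iso_trans Z Y X : Z \subset Y -> Y \subset X ->
  homology_iso Z Y -> homology_iso Y X -> homology_iso Z X.
Proof.
move=> sZY sYX isoZY isoYX n; have [onZY intoZY] := isoZY n.
have [onYX intoYX] := isoYX n; split=> [z /onYX[w /onZY[v v_cyc w_v] z_w]|w w_in].
  by exists v => //; apply: homologous_in_trans z_w (homologous_in_subset sYX w_v).
by move=> /intoYX/intoZY; apply => //; apply: chain_in_subset w_in.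
Qed.

Lemma homology_iso_setD1 X x y : y \in X -> x != y ->
  (forall T, x \in T -> k (y |: T) = k T) -> homology_iso (X :\ x) X.
Proof.
move=> yX xy red n; have sXxX := subD1set X x.
have h_bd := homotopyE yX xy red; split=> [z /cycle_inP[z_in bd_z]|w w_in].
  have hz_in := chain_in_homotopy yX xy red z_in.
  exists (z - bd k X (homotopy x y z)); last first.
    by apply/homologous_inE; rewrite opprB addrC subrK; apply: boundary_in_bd.
  apply: (cycle_in_supset sXxX).
    apply/cycle_inP; rewrite linearB /= bdK subr0.
    by split=> //; apply/chain_inB/chain_in_bd.
  apply: chain_in_setD1 => [|S xS]; first by apply/chain_inB/chain_in_bd.
  rewrite !dsumE -[z S](h_bd z S xS).
  have -> : homotopy x y (bd k X z) = 0 by rewrite bd_z linear0.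
  by rewrite !dsumE addr0 subrr.
move=> /boundary_inP[b b_in w_bd].
have w_x S : x \in S -> w S = 0.
  by move=> xS; apply: chain_in_eq0 w_in _; apply/subsetPn; exists x; rewrite ?setD11.
have hw0 : homotopy x y w = 0 := homotopy_eq0 xy red w_x.
pose b' := b - (bd k X (homotopy x y b) + homotopy x y w).
have b'_in : chain_in k (X :\ x) n.+1 b'.
  apply: chain_in_setD1 => [|S xS].
    apply/chain_inB/chain_inD => //; last exact: chain_in_homotopy (chain_in_subset sXxX w_in).
    exact/chain_in_bd/chain_in_homotopy.
  by rewrite /b' !dsumE w_bd -[b S](h_bd b S xS) dsumE subrr.
apply/boundary_inP; exists b' => //; rewrite -(bd_subset sXxX b'_in) /b'.
by rewrite !linearB linearD /= bdK hw0 linear0 addr0 subr0 w_bd.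
Qed.

Lemma homology_iso_redundant Y X : Y \subset X ->
  (forall x, x \in X :\: Y ->
     exists2 y, y \in Y & forall T, x \in T -> k (y |: T) = k T) ->
  homology_iso Y X.
Proof.
move eq_m : #|X :\: Y| => m; elim: m X eq_m => [|m IHm] X cardXY sYX redXY.
  suff -> : X = Y by apply: homology_iso_refl.
  by apply/eqP; rewrite eqEsubset sYX andbT -setD_eq0 -cards_eq0 cardXY.
have [x xXY] : exists x, x \in X :\: Y by apply/set0Pn; rewrite -card_gt0 cardXY.
have [y yY red] := redXY x xXY; move: (xXY); rewrite inE => /andP[xY xX].
have sYXx : Y \subset X :\ x.
  by apply/subsetP => u uY; rewrite !inE (subsetP sYX) // andbT; apply: contraNneq xY => <-.
apply: (homology_iso_trans sYXx (subD1set X x)).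
  apply: IHm => // [|u]; last by rewrite !inE => /and3P[uY _ uX]; apply: redXY; rewrite inE uY.
  have -> : (X :\ x) :\: Y = (X :\: Y) :\ x by apply/setP => u; rewrite !inE andbCA.
  by have := cardsD1 x (X :\: Y); rewrite cardXY xXY add1n => -[].
by apply: homology_iso_setD1 red; [apply: (subsetP sYX) | apply: contraNneq xY => ->].
Qed.

Lemma homologous_in_iso Y X n c c' : Y \subset X -> homology_iso Y X ->
  chain_in k Y n c -> chain_in k Y n c' ->
  homologous_in k Y n c c' <-> homologous_in k X n c c'.
Proof.
move=> sYX isoYX c_in c'_in; split; first exact: homologous_in_subset.
by have [_ intoYX] := isoYX n; apply: intoYX; apply: chain_inB.
Qed.

Lemma boundary_in_iso Y X n c : Y \subset X -> homology_iso Y X ->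
  chain_in k Y n c -> boundary_in k Y n c <-> boundary_in k X n c.
Proof.
move=> sYX isoYX c_in; rewrite -!homologous_in0.
by apply: homologous_in_iso => // S; rewrite dsum0E.
Qed.

(* Junk value [0] when [c] has no such representative. *)
Definition represent Y X n (c : chains k) : chains k :=
  epsilon (inhabits 0) (fun w => cycle_in k Y n w /\ homologous_in k X n c w).

Lemma representP Y X n c : homology_iso Y X -> cycle_in k X n c ->
  cycle_in k Y n (represent Y X n c) /\ homologous_in k X n c (represent Y X n c).
Proof.
move=> isoYX c_cyc.
apply: (epsilon_spec _ (fun w => cycle_in k Y n w /\ homologous_in k X n c w)).
by have [onYX _] := isoYX n; have [w] := onYX c c_cyc; exists w.
Qed.

Lemma hom_map_represent Z Y X n : Z \subset X -> Y \subset X -> homology_iso Y X ->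
  @hom_map _ _ (kcomplex k Z) (kcomplex k Y) n n (represent Y X n).
Proof.
move=> sZX sYX isoYX.
have rep c : cycle_in k Z n c ->
    cycle_in k Y n (represent Y X n c) /\ homologous_in k X n c (represent Y X n c).
  by move=> /(cycle_in_subset sZX); apply: representP.
have via_X c c' : cycle_in k Z n c -> cycle_in k Y n c' ->
    homologous_in k X n c c' -> homologous_in k Y n (represent Y X n c) c'.
  move=> /rep[w_cyc c_w] c'_cyc c_c'.
  apply/(homologous_in_iso sYX isoYX (proj1 w_cyc) (proj1 c'_cyc)).
  exact: homologous_in_trans (homologous_in_sym c_w) c_c'.
apply/hom_mapE; split=> [c /rep[]//|c c' c_cyc /rep[w'_cyc c'_w] c_c'||r c c_cyc].
- apply: via_X => //.
  exact: homologous_in_trans (homologous_in_subset sZX c_c') c'_w.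
- move=> c c' /[dup] c_cyc /rep[w_cyc c_w] /[dup] c'_cyc /rep[w'_cyc c'_w].
  apply: via_X (cycle_inD c_cyc c'_cyc) (cycle_inD w_cyc w'_cyc) _.
  exact: homologous_inD.
- have [w_cyc c_w] := rep c c_cyc.
  exact: via_X (cycle_inZ r c_cyc) (cycle_inZ r w_cyc) (homologous_inZ r c_w).
Qed.

Lemma hom_map_inclusion Y X n : Y \subset X ->
  @hom_map _ _ (kcomplex k Y) (kcomplex k X) n n id.
Proof.
move=> sYX; apply/hom_mapE; split=> [c|c c' _ _|c c' _ _|r c _].
- exact: cycle_in_subset.
- exact: homologous_in_subset.
- exact: homologous_in_refl.
- exact: homologous_in_refl.
Qed.

Lemma hom_onto_inclusion0 Y X : Y \subset X ->
  @hom_onto _ _ (kcomplex k Y) (kcomplex k X) 0 0 id.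
Proof.
move=> sYX z z_cyc; exists z; split; last exact: homologous_in_refl.
apply: (cycle_in_supset sYX z_cyc) => S nS; apply: (proj1 z_cyc).
by apply: contra nS => /andP[_ /eqP/cards0_eq ->]; rewrite sub0set cards0.
Qed.
End BooleanComplex.

Section LinearMaps.
Variables (k1 k2 : labelling) (X1 X2 : {set L}) (n1 n2 : nat).
Variable h : {linear chains k1 -> chains k2}.
Hypothesis h_cycle : forall c, cycle_in k1 X1 n1 c -> cycle_in k2 X2 n2 (h c).
Hypothesis h_boundary : forall c, boundary_in k1 X1 n1 c -> boundary_in k2 X2 n2 (h c).

Lemma homologous_in_linear c c' :
  homologous_in k1 X1 n1 c c' -> homologous_in k2 X2 n2 (h c) (h c').
Proof. by move=> /homologous_inE/h_boundary; rewrite linearB. Qed.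

Lemma hom_map_linear_comp (k3 : labelling) X3 n3 (g : chains k2 -> chains k3) :
  @hom_map _ _ (kcomplex k2 X2) (kcomplex k3 X3) n2 n3 g ->
  @hom_map _ _ (kcomplex k1 X1) (kcomplex k3 X3) n1 n3 (g \o h).
Proof.
move=> /hom_mapE[g_cycle g_hom g_add g_scale]; apply/hom_mapE.
split=> [c /h_cycle/g_cycle //|c c' c_cyc c'_cyc c_c'|c c' c_cyc c'_cyc|r c c_cyc] /=.
- by apply: g_hom; [apply: h_cycle..|apply: homologous_in_linear].
- by rewrite linearD; apply: g_add; apply: h_cycle.
- by rewrite linearZ; apply: g_scale; apply: h_cycle.
Qed.

Lemma hom_map_comp_linear (k0 : labelling) X0 n0 (g : chains k0 -> chains k1) :
  @hom_map _ _ (kcomplex k0 X0) (kcomplex k1 X1) n0 n1 g ->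
  @hom_map _ _ (kcomplex k0 X0) (kcomplex k2 X2) n0 n2 (h \o g).
Proof.
move=> /hom_mapE[g_cycle g_hom g_add g_scale]; apply/hom_mapE.
split=> [c /g_cycle/h_cycle //|c c' c_cyc c'_cyc c_c'|c c' c_cyc c'_cyc|r c c_cyc] /=.
- exact/homologous_in_linear/g_hom.
- by rewrite -linearD; apply/homologous_in_linear/g_add.
- by rewrite -linearZ; apply/homologous_in_linear/g_scale.
Qed.
End LinearMaps.

Lemma bjoin_mono : {homo @bjoin disp L : S S' / S \subset S' >-> (S <= S')%O}.
Proof. by move=> S S' sSS'; apply: le_joins. Qed.

Lemma bjoinU1 b S : bjoin (b |: S) = (b `|` bjoin S)%O.
Proof. by rewrite /bjoin joins_setU big_set1. Qed.

Definition join_lab := Labelling bjoin_mono.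

Section Cone.
Variables (rk : L -> nat) (a : L).
Hypotheses (rk_geo : geometric rk) (a_atom : a \in atoms rk).

Local Notation A := (atoms rk).
Local Notation A' := (atoms rk :\ a).
Local Notation Cov := [set y | covers a y].
Local Notation E := (atoms rk :\ a :|: [set y | covers a y]).
Local Notation J := join_lab.

Definition ajoin S := (a `|` bjoin S)%O.

Lemma ajoin_mono : {homo ajoin : S S' / S \subset S' >-> (S <= S')%O}.
Proof. by move=> S S' sSS'; apply: leU2 => //; apply: bjoin_mono. Qed.

Definition ajoin_lab := Labelling ajoin_mono.
Local Notation K := ajoin_lab.

Lemma ajoinE S : K S = J (a |: S).
Proof. by rewrite /= bjoinU1. Qed.

Lemma ajoin_le S : (K S <= J (a |: S))%O.
Proof. by rewrite ajoinE. Qed.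

Lemma le_ajoin S : (J (a |: S) <= K S)%O.
Proof. by rewrite ajoinE. Qed.

Lemma ajoin_setD1 S : a \in S -> K (S :\ a) = J S.
Proof. by move=> aS; rewrite ajoinE setD1K. Qed.

Lemma le_bjoin_ajoin S : (J S <= K S)%O.
Proof. exact: leUr. Qed.

Lemma ajoinU1 y T : (y <= K T)%O -> K (y |: T) = K T.
Proof. by move=> le_yT; rewrite /= /ajoin bjoinU1 joinCA join_r. Qed.

(* With this sign [acomp] below commutes with the differentials. *)
Definition asign S : R := psign (fun u => (enum_rank a < enum_rank u)%N) S.

Lemma asignU1 S b : b \notin S ->
  asign (b |: S) = (-1) ^+ (enum_rank a < enum_rank b)%N * asign S.
Proof. exact: psignU1. Qed.

Lemma asign_sq S : asign S * asign S = 1.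
Proof. exact: psign_sq. Qed.

Lemma bsign_asign S b : a \notin S -> b \notin S ->
  bsign (a |: S) b * asign (b |: S) = asign S * bsign S b.
Proof.
move=> aS bS; rewrite bsignU1 // asignU1 // mulrACA -expr2 sqrr_sign mul1r.
exact: mulrC.
Qed.

Definition acomp (c : chains J) : chains K := fun S =>
  if a \in S then 0 else asign S *: Fr (K S) (J (a |: S)) (c (a |: S)).

Definition alift (u : chains K) : chains J := fun S =>
  if a \in S then asign (S :\ a) *: Fr (J S) (K (S :\ a)) (u (S :\ a)) else 0.

Definition connecting (u : chains K) : chains J := fun S =>
  if a \in S then 0 else (bsign S a * asign S) *: Fr (J S) (K S) (u S).

Lemma acomp_is_linear : linear acomp.
Proof.
move=> r c c'; apply: dsumP => S; rewrite !dsumE /acomp.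
case: ifP => _; first by rewrite scaler0 addr0.
by rewrite FrD ?ajoin_le // FrZ ?ajoin_le // scalerDr !scalerA mulrC.
Qed.

Lemma alift_is_linear : linear alift.
Proof.
move=> r u u'; apply: dsumP => S; rewrite !dsumE /alift.
case: ifP => aS; last by rewrite scaler0 addr0.
by rewrite FrD ?ajoin_setD1 // FrZ ?ajoin_setD1 // scalerDr !scalerA mulrC.
Qed.

Lemma connecting_is_linear : linear connecting.
Proof.
move=> r u u'; apply: dsumP => S; rewrite !dsumE /connecting.
case: ifP => _; first by rewrite scaler0 addr0.
by rewrite FrD ?le_bjoin_ajoin // FrZ ?le_bjoin_ajoin // scalerDr !scalerA mulrC.
Qed.

HB.instance Definition _ :=
  GRing.isLinear.Build R (chains J) (chains K) *:%R acomp acomp_is_linear.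
HB.instance Definition _ :=
  GRing.isLinear.Build R (chains K) (chains J) *:%R alift alift_is_linear.
HB.instance Definition _ :=
  GRing.isLinear.Build R (chains K) (chains J) *:%R connecting connecting_is_linear.

Lemma alift_acomp c S : alift (acomp c) S = if a \in S then c S else 0.
Proof.
rewrite /alift; case: ifP => // aS; rewrite /acomp setD11 setD1K //.
by rewrite FrZ ?ajoin_setD1 // scalerA asign_sq scale1r FrK ?ajoin_setD1.
Qed.

Lemma acomp_alift n u : chain_in K A' n u -> acomp (alift u) = u.
Proof.
move=> u_in; apply: dsumP => S; rewrite /acomp; case: ifP => [aS|/negbT aS].
  by rewrite (chain_in_eq0 u_in) //; apply/subsetPn; exists a; rewrite ?setD11.
rewrite /alift setU11 setU1K // FrZ ?ajoin_le // scalerA asign_sq scale1r.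
by rewrite FrK ?ajoinE.
Qed.

Lemma acomp_eq0 n c : chain_in J A' n c -> acomp c = 0.
Proof.
move=> c_in; apply: dsumP => S; rewrite /acomp; case: ifP => // _.
rewrite (chain_in_eq0 c_in) ?Fr0 ?scaler0 ?ajoin_le //.
by apply/subsetPn; exists a; rewrite ?setU11 ?setD11.
Qed.

Lemma chain_in_acomp n c : chain_in J A n.+1 c -> chain_in K A' n (acomp c).
Proof.
move=> c_in S nS; rewrite /acomp; case: ifP => // /negbT aS.
rewrite c_in ?Fr0 ?scaler0 ?ajoin_le //; apply: contra nS => /=.
rewrite subUset sub1set cardsU1 aS add1n eqSS => /andP[/andP[_ sSA] ->].
by rewrite andbT; apply/subsetP => u uS; rewrite in_setD1 (subsetP sSA) // andbT;
  apply: contraNneq aS => <-.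
Qed.

Lemma chain_in_alift n u : chain_in K A' n u -> chain_in J A n.+1 (alift u).
Proof.
move=> u_in S nS; rewrite /alift; case: ifP => // aS.
rewrite u_in ?Fr0 ?scaler0 ?ajoin_setD1 //; apply: contra nS => /= /andP[sSA /eqP cardS].
by rewrite -(setD1K aS) subUset sub1set a_atom cardsU1 setD11 cardS (subset_trans sSA (subD1set _ _)) /= add1n.
Qed.

Lemma chain_in_connecting n u : chain_in K A' n u -> chain_in J A' n (connecting u).
Proof.
by move=> u_in S nS; rewrite /connecting; case: ifP => // _; rewrite u_in // (Fr0 (le_bjoin_ajoin S)) scaler0.
Qed.

Lemma chain_in_sub_alift_acomp n c :
  chain_in J A n c -> chain_in J A' n (c - alift (acomp c)).
Proof.
move=> c_in; apply: chain_in_setD1 => [S nS|S aS]; last by rewrite !dsumE alift_acomp aS subrr.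
by rewrite !dsumE alift_acomp c_in //; case: ifP; rewrite subrr ?subr0.
Qed.

Lemma bd_acomp c : bd K A' (acomp c) = acomp (bd J A c).
Proof.
apply: dsumP => S; rewrite /acomp; case: ifP => [aS|/negbT aS].
  rewrite bdE big1 // => b _; rewrite /acomp setU1r // Fr0 ?scaler0 //.
  exact: le_kU1.
rewrite !bdE; have -> : A :\: (a |: S) = A' :\: S.
  by apply/setP => u; rewrite !inE negb_or -andbA [LHS]andbCA.
rewrite Fr_sum ?ajoin_le // scaler_sumr; apply: eq_bigr => b /setDP[/setD1P[ba _] bS].
have abS : a \notin b |: S by rewrite !inE negb_or eq_sym ba.
rewrite /acomp (negbTE abS) FrZ ?le_kU1 // FrC ?le_kU1 ?ajoin_le //.
rewrite FrZ ?ajoin_le // FrC ?ajoin_le ?le_kU1 // [a |: _]setUCA !scalerA.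
by congr (_ *: _); rewrite bsignU1 // asignU1 //; ring.
Qed.

Lemma alift_in u S : a \in S ->
  alift u S = asign (S :\ a) *: Fr (J S) (K (S :\ a)) (u (S :\ a)).
Proof. by rewrite /alift => ->. Qed.

Lemma alift_notin u S : a \notin S -> alift u S = 0.
Proof. by rewrite /alift => /negbTE ->. Qed.

Lemma setD_atomsU1 T : A :\: (a |: T) = A' :\: T.
Proof. by apply/setP => u; rewrite !inE negb_or -andbA [LHS]andbCA. Qed.

Lemma bd_alift_in u T : a \notin T -> bd J A (alift u) (a |: T) = alift (bd K A' u) (a |: T).
Proof.
move=> aT; rewrite bdE alift_in ?setU11 // setU1K // bdE setD_atomsU1.
rewrite Fr_sum ?le_ajoin // scaler_sumr; apply: eq_bigr => b /setDP[/setD1P[ba _] bT].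
have eq_bT : (b |: (a |: T)) :\ a = b |: T.
  by rewrite setUCA setU1K // !inE negb_or eq_sym ba.
have le_baT_bT : (J (b |: (a |: T)) <= K (b |: T))%O by rewrite ajoinE setUCA.
have abaT : a \in b |: (a |: T) by rewrite !inE eqxx orbT.
rewrite (alift_in _ abaT) eq_bT FrZ ?le_kU1 // FrC ?le_kU1 //.
by rewrite FrZ ?le_ajoin // FrC ?le_ajoin ?le_kU1 // !scalerA bsign_asign.
Qed.

Lemma bd_alift_notin u S : a \notin S -> bd J A (alift u) S = connecting u S.
Proof.
move=> aS; have aAS : a \in A :\: S by rewrite inE aS a_atom.
rewrite bdE (big_setD1 a aAS) big1 ?addr0 => [|b]; last first.
  rewrite !inE => /andP[ba _]; rewrite alift_notin ?Fr0 ?scaler0 ?le_kU1 //.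
  by rewrite !inE negb_or eq_sym ba.
rewrite alift_in ?setU11 // setU1K // FrZ ?le_kU1 // FrC ?le_kU1 ?le_ajoin //.
by rewrite scalerA /connecting (negbTE aS); apply: addr0.
Qed.

Lemma bd_alift u : bd J A (alift u) = alift (bd K A' u) + connecting u.
Proof.
apply: dsumP => S; rewrite dsumE; have [aS|aS] := boolP (a \in S).
  rewrite /connecting aS addr0 -(setD1K aS) bd_alift_in //.
  by rewrite setD11.
by rewrite bd_alift_notin // alift_notin // add0r.
Qed.

Lemma bd_alift_cycle u : bd K A' u = 0 -> bd J A (alift u) = connecting u.
Proof. by move=> bd_u; rewrite bd_alift bd_u linear0 add0r. Qed.

Lemma boundary_in_connecting_atoms n u :
  cycle_in K A' n u -> boundary_in J A n (connecting u).
Proof.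
move=> /cycle_inP[u_in bd_u]; rewrite -(bd_alift_cycle bd_u).
exact/boundary_in_bd/chain_in_alift.
Qed.

Lemma cycle_in_connecting n u : cycle_in K A' n u -> cycle_in J A' n (connecting u).
Proof.
move=> /cycle_inP[u_in bd_u]; have cu_in := chain_in_connecting u_in.
apply/cycle_inP; split=> //.
by rewrite -(bd_subset (subD1set A a) cu_in) -(bd_alift_cycle bd_u) bdK.
Qed.

Lemma boundary_in_connecting n u :
  boundary_in K A' n u -> boundary_in J A' n (connecting u).
Proof.
move=> /boundary_inP[v v_in ->]; have cv_in := chain_in_connecting v_in.
apply/boundary_inP; exists (- connecting v); first exact: chain_inN.
rewrite linearN /= -(bd_subset (subD1set A a) cv_in); apply/eqP; rewrite -addr_eq0.
by have := bdK A (alift v); rewrite bd_alift linearD /= bd_alift bdK linear0 add0r => ->.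
Qed.

Lemma cycle_in_acomp n c : cycle_in J A n.+1 c -> cycle_in K A' n (acomp c).
Proof.
move=> /cycle_inP[c_in bd_c]; apply/cycle_inP.
by rewrite bd_acomp bd_c linear0; split=> //; apply: chain_in_acomp.
Qed.

Lemma boundary_in_acomp n c : boundary_in J A n.+1 c -> boundary_in K A' n (acomp c).
Proof.
move=> /boundary_inP[b b_in ->]; rewrite -bd_acomp.
exact/boundary_in_bd/chain_in_acomp.
Qed.

Lemma boundary_in_connecting_acomp n z :
  cycle_in J A n.+1 z -> boundary_in J A' n (connecting (acomp z)).
Proof.
move=> /cycle_inP[z_in bd_z].
have r_in : chain_in J A' n.+1 (alift (acomp z) - z).
  by rewrite -opprB; apply/chain_inN/chain_in_sub_alift_acomp.
apply/boundary_inP; exists (alift (acomp z) - z) => //.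
rewrite -(bd_subset (subD1set A a) r_in) linearB /= bd_alift bd_acomp.
by rewrite bd_z subr0 !linear0 add0r.
Qed.

Lemma boundary_in_acompP n z : cycle_in J A n.+1 z ->
  boundary_in K A' n (acomp z) <->
  exists2 w, cycle_in J A' n.+1 w & homologous_in J A n.+1 w z.
Proof.
move=> z_cyc; split=> [/boundary_inP[v v_in acomp_z]|[w w_cyc /homologous_inE w_z]].
  have lv_in := chain_in_alift v_in.
  exists (z - bd J A (alift v)); last first.
    by apply/homologous_inE; rewrite addrAC subrr add0r; apply/boundary_inN/boundary_in_bd.
  apply: (cycle_in_supset (subD1set A a)); first exact/cycle_inB/cycle_in_bd.
  apply: chain_in_setD1 => [|S aS]; first exact/chain_inB/chain_in_bd/lv_in/(proj1 z_cyc).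
  have := alift_acomp (z - bd J A (alift v)) S.
  by rewrite aS linearB /= -bd_acomp (acomp_alift v_in) -acomp_z subrr linear0 => <-.
move: w_z => /boundary_in_acomp; rewrite linearB /= (acomp_eq0 (proj1 w_cyc)) sub0r.
by move=> /boundary_inN; rewrite opprK.
Qed.

Lemma boundary_in_deletionP n z : cycle_in J A' n z ->
  boundary_in J A n z <->
  exists2 u, cycle_in K A' n u & homologous_in J A' n (connecting u) z.
Proof.
move=> z_cyc; split=> [/boundary_inP[b b_in z_bd]|[u u_cyc /homologous_inE u_z]].
  have r_in := chain_in_sub_alift_acomp b_in.
  exists (acomp b).
    apply/cycle_inP; split; first exact: chain_in_acomp.
    by rewrite bd_acomp -z_bd (acomp_eq0 (proj1 z_cyc)).
  apply/homologous_inE/boundary_inP; exists (- (b - alift (acomp b))); first exact: chain_inN.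
  rewrite linearN /= -(bd_subset (subD1set A a) r_in) linearB /= bd_alift bd_acomp -z_bd.
  by rewrite (acomp_eq0 (proj1 z_cyc)) linear0 add0r opprB.
have -> : z = connecting u - (connecting u - z) by rewrite opprB addrC subrK.
exact: boundary_inB (boundary_in_connecting_atoms u_cyc) (boundary_in_subset (subD1set A a) u_z).
Qed.

Lemma boundary_in_restrictionP n u : cycle_in K A' n u ->
  boundary_in J A' n (connecting u) <->
  exists2 z, cycle_in J A n.+1 z & homologous_in K A' n (acomp z) u.
Proof.
move=> /[dup] u_cyc /cycle_inP[u_in bd_u].
split=> [/boundary_inP[v v_in conn_u]|[z z_cyc /homologous_inE z_u]].
  exists (alift u - v).
    apply/cycle_inP; split.
      exact: chain_inB (chain_in_alift u_in) (chain_in_subset (subD1set A a) v_in).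
    by rewrite linearB /= (bd_subset (subD1set A a) v_in) -conn_u bd_alift_cycle // subrr.
  rewrite linearB /= (acomp_alift u_in) (acomp_eq0 v_in) subr0.
  exact: homologous_in_refl.
have -> : u = acomp z - (acomp z - u) by rewrite opprB addrC subrK.
rewrite linearB; exact: boundary_inB (boundary_in_connecting_acomp z_cyc) (boundary_in_connecting z_u).
Qed.

Lemma homology_iso_cover : homology_iso K Cov E.
Proof.
apply: homology_iso_redundant => [|x]; first exact: subsetUr.
rewrite inE => /andP[xCov /setUP[/setD1P[xa xA]|]]; last by rewrite (negbTE xCov).
exists (a `|` x)%O; first by rewrite inE (covers_join rk_geo).
by move=> T xT; apply: ajoinU1; apply: leU2 => //; apply: joins_sup.
Qed.

Lemma homology_iso_atoms : homology_iso K A' E.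
Proof.
apply: homology_iso_redundant => [|x]; first exact: subsetUl.
rewrite inE => /andP[xA' /setUP[|]]; first by rewrite (negbTE xA').
rewrite inE => /(atom_le_cover rk_geo)[b bA' le_bx]; exists b => // T xT.
apply: ajoinU1; rewrite /= /ajoin; apply: le_trans le_bx _; apply: le_trans _ (leUr _ a).
exact: joins_sup.
Qed.

Definition cone_alpha n : chains K -> chains J :=
  connecting \o represent (k := K) A' E n.

Definition cone_delta n : chains J -> chains K :=
  represent (k := K) Cov E n \o acomp.

Lemma hom_map_cone_alpha n :
  @hom_map _ _ (kcomplex K Cov) (kcomplex J A') n n (cone_alpha n).
Proof.
apply: hom_map_comp_linear; [exact: cycle_in_connecting|exact: boundary_in_connecting|].
exact: hom_map_represent (subsetUr _ _) (subsetUl _ _) homology_iso_atoms.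
Qed.

Lemma hom_map_cone_delta n :
  @hom_map _ _ (kcomplex J A) (kcomplex K Cov) n.+1 n (cone_delta n).
Proof.
apply: (hom_map_linear_comp (X2 := E)).
- by move=> c /cycle_in_acomp; apply: cycle_in_subset; apply: subsetUl.
- by move=> c /boundary_in_acomp; apply: boundary_in_subset; apply: subsetUl.
- exact: hom_map_represent (subxx _) (subsetUr _ _) homology_iso_cover.
Qed.

Lemma exact_at_deletion n :
  @exact_at _ _ (kcomplex K Cov) (kcomplex J A') (kcomplex J A) n n n (cone_alpha n) id.
Proof.
apply/exact_atE => z z_cyc; rewrite homologous_in0 boundary_in_deletionP //.
split=> [[u u_cyc u_z]|[w [w_cyc w_z]]]; last first.
  have [u_cyc _] := representP homology_iso_atoms (cycle_in_subset (subsetUr _ _) w_cyc).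
  by exists (represent (k := K) A' E n w).
have [w_cyc u_w] := representP homology_iso_cover (cycle_in_subset (subsetUl _ _) u_cyc).
set w := represent Cov E n u in w_cyc u_w *; exists w; split=> //.
have [u'_cyc w_u'] := representP homology_iso_atoms (cycle_in_subset (subsetUr _ _) w_cyc).
have u_u' : homologous_in K A' n u (represent A' E n w).
  apply/(homologous_in_iso (subsetUl _ _) homology_iso_atoms (proj1 u_cyc) (proj1 u'_cyc)).
  exact: homologous_in_trans u_w w_u'.
have := homologous_in_linear (@boundary_in_connecting n) u_u'.
by move=> /homologous_in_sym /homologous_in_trans; apply.
Qed.

Lemma exact_at_cover n :
  @exact_at _ _ (kcomplex J A') (kcomplex J A) (kcomplex K Cov) n.+1 n.+1 n id (cone_delta n).
Proof.
apply/exact_atE => z z_cyc; rewrite homologous_in0 /cone_delta /=.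
have az_cyc := cycle_in_acomp z_cyc.
have [d_cyc az_d] := representP homology_iso_cover (cycle_in_subset (subsetUl _ _) az_cyc).
rewrite (boundary_in_iso (subsetUr _ _) homology_iso_cover (proj1 d_cyc)) -homologous_in0.
rewrite -(homologous_in_congr az_d (homologous_in_refl _ _ 0)) homologous_in0.
rewrite -(boundary_in_iso (subsetUl _ _) homology_iso_atoms (proj1 az_cyc)).
rewrite boundary_in_acompP //.
by split=> [[w w_cyc w_z]|[w [w_cyc w_z]]]; exists w.
Qed.

Lemma exact_at_restriction n :
  @exact_at _ _ (kcomplex J A) (kcomplex K Cov) (kcomplex J A') n.+1 n n
    (cone_delta n) (cone_alpha n).
Proof.
apply/exact_atE => w w_cyc; rewrite homologous_in0 /cone_alpha /=.
have [u_cyc w_u] := representP homology_iso_atoms (cycle_in_subset (subsetUr _ _) w_cyc).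
have acomp_cone_delta z : cycle_in J A n.+1 z ->
    homologous_in K A' n (acomp z) (represent A' E n w) <->
    homologous_in K Cov n (cone_delta n z) w.
  move=> z_cyc; have az_cyc := cycle_in_acomp z_cyc.
  have [d_cyc az_d] := representP homology_iso_cover (cycle_in_subset (subsetUl _ _) az_cyc).
  rewrite (homologous_in_iso (subsetUl _ _) homology_iso_atoms (proj1 az_cyc) (proj1 u_cyc)).
  rewrite (homologous_in_iso (subsetUr _ _) homology_iso_cover (proj1 d_cyc) (proj1 w_cyc)).
  exact: homologous_in_congr az_d (homologous_in_sym w_u).
rewrite boundary_in_restrictionP //; split=> [[z z_cyc]|[z [z_cyc]]].
  by move=> /(acomp_cone_delta z z_cyc) z_w; exists z.
by move=> /(acomp_cone_delta z z_cyc) z_w; exists z.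
Qed.
End Cone.
End Sheaf.

Theorem theorem7 (R : comPzRingType) (disp : Order.disp_t)
    (L : finTBLatticeType disp) (rk : L -> nat) (Fm : L -> lmodType R)
    (Fr : forall x y : L, Fm y -> Fm x) (a : L) :
  geometric rk -> is_sheaf Fm Fr -> a \in atoms rk ->
  let Ct := cover_complex rk Fm Fr in
  let Cd := deletion_complex rk Fm Fr a in
  let Cr := restriction_complex Fm Fr a in
  exists (alpha : nat -> chain Cr -> chain Cd)
         (beta : nat -> chain Cd -> chain Ct)
         (delta : nat -> chain Ct -> chain Cr),
    (* maps HC_i(L^a) -> HC_i(L_a) -> HC_i(L) and HC_{i+1}(L) -> HC_i(L^a) *)
    (forall i, hom_map i i (alpha i)) /\
    (forall i, hom_map i i (beta i)) /\
    (forall i, hom_map i.+1 i (delta i)) /\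
    (* exactness at HC_i(L_a) *)
    (forall i, exact_at i i i (alpha i) (beta i)) /\
    (* exactness at HC_{i+1}(L) *)
    (forall i, exact_at i.+1 i.+1 i (beta i.+1) (delta i)) /\
    (* exactness at HC_i(L^a) *)
    (forall i, exact_at i.+1 i i (delta i) (alpha i)) /\
    (* exactness at HC_0(L): the sequence ends with HC_0(L) -> 0 *)
    hom_onto 0 0 (beta 0).
Proof.
move=> rk_geo [FrD FrZ Fr1 FrC] a_atom Ct Cd Cr.
exists (cone_alpha (a := a) Fr rk), (fun=> id), (cone_delta Fr rk a).
split; first by move=> i; exact: hom_map_cone_alpha.
split; first by move=> i; exact: (hom_map_inclusion FrD FrZ (join_lab _) i (subD1set _ a)).
split; first by move=> i; exact: hom_map_cone_delta.
split; first by move=> i; exact: exact_at_deletion.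
split; first by move=> i; exact: exact_at_cover.
split; first by move=> i; exact: exact_at_restriction.
exact: (hom_onto_inclusion0 (k := join_lab _) FrD FrZ (subD1set _ a)).
Qed.
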